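(* Let $\sigma$ be a finite sequence of transitions. If $\sigma$ satisfies at least one of the conditions (C1), (C2), (C3) below, then $\sigma$ is not $\omega$-iterable. (C1) For some clock $y\in X(\sigma)\setminus X_0$, $\sigma$ contains atomic guards $y\preccurlyeq d$ and $y\succcurlyeq c$ with $d<c$, or with $d=c$ and $\preccurlyeq$ being $<$, or with $d=c$ and $\succcurlyeq$ being $>$. (C2) There are clocks $x\in X_0$ and $y\in X(\sigma)\setminus X_0$ such that $\sigma$ contains atomic guards $y\preccurlyeq d$ and $x\succcurlyeq c$ with $c>0$. (C3) For some clock $x\in X_0$ the atomic guard $x>0$ occurs in $\sigma$, and for some clock $y\in X(\sigma)\setminus X_0$ both $y\le c$ and $y\ge c$ occur in $\sigma$ (for the same $c$).
   Context: Fix a finite set of clocks $X=\{x_0,x_1,\dots,x_m\}$, where $x_0$ is a special reference clock. A valuation is a map $v:X\to\mathbb{R}_{\ge 0}$ with $v(x_0)=0$. For $\delta\ge 0$, $v+\delta$ is the valuation adding $\delta$ to every clock other than $x_0$; for $R\subseteq X\setminus\{x_0\}$, $[R]v$ sets the clocks of $R$ to $0$ and leaves the others unchanged. A guard is a conjunction of atomic constraints $x\sim c$ with $x\in X\setminus\{x_0\}$, $\sim\in\{<,\le,=,\ge,>\}$, $c\in\mathbb{N}$. A transition $t$ is a pair $(g,R)$ of a guard $g$ and a reset set $R\subseteq X\setminus\{x_0\}$ (control states are omitted). We write $v\xrightarrow{t}^{\delta}v'$ if $v+\delta\models g$ and $v'=[R](v+\delta)$. An execution of a sequence $\sigma=t_1\cdots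 t_k$ is a sequence of valuations $v_0,\dots,v_k$ such that there are $\delta_1,\dots,\delta_k\ge 0$ with $v_{i-1}\xrightarrow{t_i}^{\delta_i}v_i$ for all $i$; we then write $v_0\xrightarrow{\sigma}^{\delta}v_k$ with $\delta=\sum_i\delta_i$, and say $\sigma$ is executable from $v_0$. The sequence $\sigma$ is $\omega$-iterable (from $v_0$) if there are infinite sequences of valuations $v_0,v_1,\dots$ and delays $\delta_1,\delta_2,\dots$ with $v_0\xrightarrow{\sigma}^{\delta_1}v_1\xrightarrow{\sigma}^{\delta_2}v_2\cdots$. For a sequence $\sigma$, $X(\sigma)$ is the set of clocks appearing in $\sigma$ (in guards or resets), and $X_0\subseteq X(\sigma)$ is the set of clocks reset on some transition of $\sigma$. The symbol $\preccurlyeq$ stands for $<$ or $\le$, and $\succcurlyeq$ stands for $>$ or $\ge$; an atomic guard $x=c$ counts both as $x\le c$ and as $x\ge c$. *)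

From Stdlib Require Import Reals List Arith.
Import ListNotations.
Open Scope R_scope.

(* Clocks are natural numbers; with parameter m the clock set is
   X = {0,1,...,m}, clock 0 being the reference clock x_0. *)
Definition clock := nat.

Inductive cmp := CLt | CLe | CEq | CGe | CGt.

Record atom := mkAtom { aclk : clock; acmp : cmp; acst : nat }.

Record trans := mkTrans { guard : list atom; resets : list clock }.

Definition valuation := clock -> R.

Definition is_valuation (m : nat) (v : valuation) : Prop :=
  v 0%nat = 0 /\ forall x : clock, (1 <= x <= m)%nat -> 0 <= v x.

Definition wf_trans (m : nat) (t : trans) : Prop :=
  (forall a, In a (guard t) -> (1 <= aclk a <= m)%nat) /\
  (forall x, In x (resets t) -> (1 <= x <= m)%nat).

Definition delay (v : valuation) (d : R) : valuation :=
  fun x => if Nat.eqb x 0 then v x else v x + d.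

Definition reset (Rs : list clock) (v : valuation) : valuation :=
  fun x => if existsb (Nat.eqb x) Rs then 0 else v x.

Definition sat_atom (v : valuation) (a : atom) : Prop :=
  let x := v (aclk a) in
  let c := INR (acst a) in
  match acmp a with
  | CLt => x < c | CLe => x <= c | CEq => x = c | CGe => x >= c | CGt => x > c
  end.

Definition sat_guard (v : valuation) (g : list atom) : Prop :=
  forall a, In a g -> sat_atom v a.

Definition step (t : trans) (d : R) (v v' : valuation) : Prop :=
  sat_guard (delay v d) (guard t) /\ v' = reset (resets t) (delay v d).

Inductive exec : list trans -> valuation -> valuation -> Prop :=
  | exec_nil : forall v, exec [] v v
  | exec_cons : forall t s v v' v'' d,
      0 <= d -> step t d v v' -> exec s v' v'' -> exec (t :: s) v v''.

Definition omega_iterable (sigma : list trans) (v0 : valuation) : Prop :=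
  exists vs : nat -> valuation, vs 0%nat = v0 /\
    forall i : nat, exec sigma (vs i) (vs (S i)).

Definition occurs (a : atom) (sigma : list trans) : Prop :=
  exists t, In t sigma /\ In a (guard t).

Definition in_Xs (x : clock) (sigma : list trans) : Prop :=
  exists t, In t sigma /\ ((exists a, In a (guard t) /\ aclk a = x) \/ In x (resets t)).

Definition in_X0 (x : clock) (sigma : list trans) : Prop :=
  exists t, In t sigma /\ In x (resets t).

(* "upper" atoms  x ≼ c  (x = c counts) and "lower" atoms  x ≽ c *)
Definition is_upper (k : cmp) : Prop := k = CLt \/ k = CLe \/ k = CEq.
Definition is_lower (k : cmp) : Prop := k = CGt \/ k = CGe \/ k = CEq.

Definition cond_C1 (sigma : list trans) : Prop :=
  exists y, in_Xs y sigma /\ ~ in_X0 y sigma /\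
    exists k1 d k2 c,
      occurs (mkAtom y k1 d) sigma /\ is_upper k1 /\
      occurs (mkAtom y k2 c) sigma /\ is_lower k2 /\
      ((d < c)%nat \/ (d = c /\ (k1 = CLt \/ k2 = CGt))).

Definition cond_C2 (sigma : list trans) : Prop :=
  exists x y, in_X0 x sigma /\ in_Xs y sigma /\ ~ in_X0 y sigma /\
    exists k1 d k2 c,
      occurs (mkAtom y k1 d) sigma /\ is_upper k1 /\
      occurs (mkAtom x k2 c) sigma /\ is_lower k2 /\ (0 < c)%nat.

Definition cond_C3 (sigma : list trans) : Prop :=
  (exists x, in_X0 x sigma /\ occurs (mkAtom x CGt 0) sigma) /\
  (exists y c, in_Xs y sigma /\ ~ in_X0 y sigma /\
     (occurs (mkAtom y CLe c) sigma \/ occurs (mkAtom y CEq c) sigma) /\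
     (occurs (mkAtom y CGe c) sigma \/ occurs (mkAtom y CEq c) sigma)).

(** A clock y that is never reset along sigma only grows, and so does its
    lead y - x over any nonnegative clock x (delays shift both, resetting x
    only increases the lead). Hence the guards on y met during a run are
    checked at nondecreasing values of y, which rules out (C1). After a
    round resetting x, the lead of y over x is at least the value of y at
    the start of that round; one further round, in which a guard x ≽ c is
    met, therefore raises y by at least c. Under (C2) y grows by 1 every two
    rounds while staying bounded by d; under (C3) y strictly grows between
    rounds 1 and 3 although it is pinned to the value c. *)

From Stdlib Require Import Reals List Lra Lia.
Open Scope R_scope.

Lemma reset_notin Rs v z : ~ In z Rs -> reset Rs v z = v z.
Proof.
  intros Hz; unfold reset.
  destruct (existsb (Nat.eqb z) Rs) eqn:E; auto.
  apply existsb_exists in E as [w [Hw Hzw]]; apply Nat.eqb_eq in Hzw; subst.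
  contradiction.
Qed.

Lemma reset_in Rs v z : In z Rs -> reset Rs v z = 0.
Proof.
  intros Hz; unfold reset.
  replace (existsb (Nat.eqb z) Rs) with true; auto.
  symmetry; apply existsb_exists; exists z; split; auto using Nat.eqb_refl.
Qed.

Lemma reset_bounds Rs v z : 0 <= v z -> 0 <= reset Rs v z <= v z.
Proof. intros H; unfold reset; destruct existsb; lra. Qed.

Lemma delay_nz v d z : z <> 0%nat -> delay v d z = v z + d.
Proof. intros H; unfold delay; destruct (Nat.eqb_spec z 0); easy. Qed.

Lemma step_unreset t d v v' y :
  step t d v v' -> ~ In y (resets t) -> y <> 0%nat -> v' y = v y + d.
Proof. intros [_ ->] Hy Hy0; rewrite reset_notin, delay_nz; auto. Qed.

Lemma step_bounds t d v v' x :
  step t d v v' -> x <> 0%nat -> 0 <= d -> 0 <= v x -> 0 <= v' x <= v x + d.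
Proof.
  intros [_ ->] Hx0 Hd Hx; rewrite <- delay_nz with (v := v) by auto.
  apply reset_bounds; rewrite delay_nz; auto; lra.
Qed.

Lemma not_in_X0_cons y t s :
  ~ in_X0 y (t :: s) -> ~ In y (resets t) /\ ~ in_X0 y s.
Proof.
  intros H; split; [intros Hy | intros [t' [Ht' Hy]]];
    apply H; [exists t | exists t']; simpl; auto.
Qed.

Lemma in_X0_cons x t s : in_X0 x (t :: s) -> In x (resets t) \/ in_X0 x s.
Proof. intros [t' [[<- | Ht'] Hx]]; [left | right; exists t']; auto. Qed.

Lemma occurs_cons a t s : occurs a (t :: s) -> In a (guard t) \/ occurs a s.
Proof. intros [t' [[<- | Ht'] Ha]]; [left | right; exists t']; auto. Qed.

Lemma exec_nonneg x s v v' : exec s v v' -> x <> 0%nat -> 0 <= v x -> 0 <= v' x.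
Proof.
  induction 1 as [| t s v v' v'' d Hd Hstep _ IH]; auto.
  intros Hx0 Hx; apply IH; auto; eapply step_bounds; eauto.
Qed.

Section Runs.

Variable y : clock.
Hypothesis Hy0 : y <> 0%nat.

Lemma exec_clock_mono s v v' : exec s v v' -> ~ in_X0 y s -> v y <= v' y.
Proof.
  induction 1 as [| t s v v' v'' d Hd Hstep _ IH]; [lra |].
  intros [Hyt Hys]%not_in_X0_cons.
  rewrite (step_unreset _ _ _ _ _ Hstep Hyt Hy0) in IH; specialize (IH Hys); lra.
Qed.

Lemma exec_gap_mono x s v v' :
  exec s v v' -> ~ in_X0 y s -> x <> 0%nat -> 0 <= v x ->
  v y - v x <= v' y - v' x.
Proof.
  induction 1 as [| t s v v' v'' d Hd Hstep _ IH]; [lra |].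
  intros [Hyt Hys]%not_in_X0_cons Hx0 Hx.
  pose proof (step_bounds _ _ _ _ _ Hstep Hx0 Hd Hx).
  rewrite (step_unreset _ _ _ _ _ Hstep Hyt Hy0) in IH.
  specialize (IH Hys Hx0 ltac:(lra)); lra.
Qed.

(* The witness is the valuation [delay v d] at which the guard is tested. *)
Lemma exec_occurs_witness s v v' a :
  exec s v v' -> ~ in_X0 y s -> occurs a s ->
  exists w, sat_atom w a /\ (v y <= w y <= v' y) /\
    (forall x, x <> 0%nat -> 0 <= v x -> v y - v x <= w y - w x).
Proof.
  induction 1 as [| t s v v' v'' d Hd Hstep Hrun IH];
    [intros _ [t [[] _]] |].
  intros Hy Ha; destruct (not_in_X0_cons _ _ _ Hy) as [Hyt Hys].
  pose proof (step_unreset _ _ _ _ _ Hstep Hyt Hy0).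
  destruct (occurs_cons _ _ _ Ha) as [Hat | Has].
  - exists (delay v d); split; [now apply Hstep |].
    rewrite !delay_nz by auto.
    pose proof (exec_clock_mono _ _ _ Hrun Hys).
    split; [lra |]; intros x Hx0 _; rewrite delay_nz by auto; lra.
  - destruct (IH Hys Has) as [w [Hw [Hwy Hgap]]]; exists w.
    split; [exact Hw | split; [lra |]].
    intros x Hx0 Hx; pose proof (step_bounds _ _ _ _ _ Hstep Hx0 Hd Hx).
    specialize (Hgap x Hx0 ltac:(lra)); lra.
Qed.

Lemma exec_reset_gap x s v v' :
  exec s v v' -> ~ in_X0 y s -> in_X0 x s -> x <> 0%nat -> 0 <= v x ->
  v y <= v' y - v' x.
Proof.
  induction 1 as [| t s v v' v'' d Hd Hstep Hrun IH];
    [intros _ [t [[] _]] |].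
  intros Hy Hxs Hx0 Hx; destruct (not_in_X0_cons _ _ _ Hy) as [Hyt Hys].
  pose proof (step_bounds _ _ _ _ _ Hstep Hx0 Hd Hx).
  pose proof (step_unreset _ _ _ _ _ Hstep Hyt Hy0).
  destruct (in_X0_cons _ _ _ Hxs) as [Hxt | Hxs'].
  - assert (v' x = 0) by (destruct Hstep as [_ ->]; now apply reset_in).
    pose proof (exec_gap_mono x _ _ _ Hrun Hys Hx0 ltac:(lra)); lra.
  - specialize (IH Hys Hxs' Hx0 ltac:(lra)); lra.
Qed.

Lemma exec_two_rounds_drift x s u v v' a :
  exec s u v -> exec s v v' -> ~ in_X0 y s -> in_X0 x s -> occurs a s ->
  x <> 0%nat -> 0 <= u x -> exists w, sat_atom w a /\ u y + w x <= v' y.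
Proof.
  intros Hrun1 Hrun2 Hy Hxs Ha Hx0 Hx.
  pose proof (exec_reset_gap x _ _ _ Hrun1 Hy Hxs Hx0 Hx).
  destruct (exec_occurs_witness _ _ _ a Hrun2 Hy Ha) as [w [Hw [Hwy Hgap]]].
  pose proof (Hgap x Hx0 (exec_nonneg x _ _ _ Hrun1 Hx0 Hx)).
  exists w; split; [exact Hw | lra].
Qed.

End Runs.

Lemma sat_upper_le w z k c : is_upper k -> sat_atom w (mkAtom z k c) -> w z <= INR c.
Proof. unfold sat_atom; simpl; intros [-> | [-> | ->]]; lra. Qed.

Lemma sat_lower_ge w z k c : is_lower k -> sat_atom w (mkAtom z k c) -> INR c <= w z.
Proof. unfold sat_atom; simpl; intros [-> | [-> | ->]]; lra. Qed.

Lemma sat_lower_upper_compat w w' z k1 d k2 c :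
  is_upper k1 -> is_lower k2 ->
  sat_atom w (mkAtom z k2 c) -> sat_atom w' (mkAtom z k1 d) -> w z <= w' z ->
  ~ ((d < c)%nat \/ (d = c /\ (k1 = CLt \/ k2 = CGt))).
Proof.
  intros Hk1 Hk2 Hlo Hup Hw.
  pose proof (sat_lower_ge _ _ _ _ Hk2 Hlo); pose proof (sat_upper_le _ _ _ _ Hk1 Hup).
  intros [Hdc%lt_INR | [<- [-> | ->]]]; unfold sat_atom in *; simpl in *; lra.
Qed.

Lemma unbounded_of_two_step_growth (f : nat -> R) :
  (forall i, f i + 1 <= f (S (S i))) -> forall B, exists i, B < f i.
Proof.
  intros Hf B.
  assert (Hgrow : forall k, f 0%nat + INR k <= f (2 * k)%nat).
  { induction k as [| k IH]; [simpl; lra |].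
    replace (2 * S k)%nat with (S (S (2 * k))) by lia.
    rewrite S_INR; specialize (Hf (2 * k)%nat); lra. }
  destruct (INR_unbounded (B - f 0%nat)) as [k Hk].
  exists (2 * k)%nat; specialize (Hgrow k); lra.
Qed.

Section Iteration.

Variables (m : nat) (sigma : list trans) (vs : nat -> valuation).
Hypotheses (Hwf : forall t, In t sigma -> wf_trans m t)
           (Hinit : is_valuation m (vs 0%nat))
           (Hrun : forall i, exec sigma (vs i) (vs (S i))).

Lemma unreset_clock_nz y : in_Xs y sigma -> ~ in_X0 y sigma -> y <> 0%nat.
Proof.
  intros [t [Ht [[a [Ha <-]] | Hr]]] Hy.
  - destruct (Hwf t Ht) as [Hg _]; specialize (Hg a Ha); lia.
  - exfalso; apply Hy; now exists t.
Qed.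

Lemma reset_clock_nonneg x : in_X0 x sigma -> x <> 0%nat /\ forall i, 0 <= vs i x.
Proof.
  intros [t [Ht Hr]].
  destruct (Hwf t Ht) as [_ Hres]; specialize (Hres x Hr).
  assert (Hx0 : x <> 0%nat) by lia.
  split; [exact Hx0 |].
  induction i as [| i IH]; [apply Hinit; lia | exact (exec_nonneg x _ _ _ (Hrun i) Hx0 IH)].
Qed.

Lemma bounded_unreset_clock y k d :
  y <> 0%nat -> ~ in_X0 y sigma -> is_upper k -> occurs (mkAtom y k d) sigma ->
  forall i, vs i y <= INR d.
Proof.
  intros Hy0 Hy Hk Ha i.
  destruct (exec_occurs_witness y Hy0 _ _ _ _ (Hrun i) Hy Ha) as [w [Hw [Hwy _]]].
  pose proof (sat_upper_le _ _ _ _ Hk Hw); lra.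
Qed.

Lemma not_C1 : ~ cond_C1 sigma.
Proof.
  intros [y [Hys [Hy [k1 [d [k2 [c [Hup [Hk1 [Hlo [Hk2 Hdc]]]]]]]]]]].
  pose proof (unreset_clock_nz y Hys Hy) as Hy0.
  destruct (exec_occurs_witness y Hy0 _ _ _ _ (Hrun 0) Hy Hlo) as [w [Hw [Hwy _]]].
  destruct (exec_occurs_witness y Hy0 _ _ _ _ (Hrun 1) Hy Hup) as [w' [Hw' [Hwy' _]]].
  apply (sat_lower_upper_compat w w' y k1 d k2 c); auto; lra.
Qed.

Lemma not_C2 : ~ cond_C2 sigma.
Proof.
  intros [x [y [Hxs [Hys [Hy [k1 [d [k2 [c [Hup [Hk1 [Hlo [Hk2 Hc_gt0]]]]]]]]]]]]].
  pose proof (unreset_clock_nz y Hys Hy) as Hy0.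
  destruct (reset_clock_nonneg x Hxs) as [Hx0 Hx].
  assert (Hc1 : 1 <= INR c) by (apply (le_INR 1); lia).
  assert (Hdrift : forall i, vs i y + 1 <= vs (S (S i)) y).
  { intros i.
    destruct (exec_two_rounds_drift y Hy0 x _ _ _ _ _ (Hrun i) (Hrun (S i))
                Hy Hxs Hlo Hx0 (Hx i)) as [w [Hw Hwx]].
    pose proof (sat_lower_ge _ _ _ _ Hk2 Hw); lra. }
  destruct (unbounded_of_two_step_growth (fun i => vs i y) Hdrift (INR d)) as [i Hi].
  pose proof (bounded_unreset_clock y k1 d Hy0 Hy Hk1 Hup i); lra.
Qed.

Lemma not_C3 : ~ cond_C3 sigma.
Proof.
  intros [[x [Hxs Hpos]] [y [c [Hys [Hy [Hup Hlo]]]]]].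
  pose proof (unreset_clock_nz y Hys Hy) as Hy0.
  destruct (reset_clock_nonneg x Hxs) as [Hx0 Hx].
  assert (Hup' : exists k, is_upper k /\ occurs (mkAtom y k c) sigma).
  { destruct Hup; eexists; split; eauto; unfold is_upper; auto. }
  assert (Hlo' : exists k, is_lower k /\ occurs (mkAtom y k c) sigma).
  { destruct Hlo; eexists; split; eauto; unfold is_lower; auto. }
  destruct Hup' as [ku [Hku Hau]], Hlo' as [kl [Hkl Hal]].
  destruct (exec_occurs_witness y Hy0 _ _ _ _ (Hrun 0) Hy Hal) as [w [Hw [Hwy _]]].
  pose proof (sat_lower_ge _ _ _ _ Hkl Hw).
  destruct (exec_two_rounds_drift y Hy0 x _ _ _ _ _ (Hrun 1) (Hrun 2)
              Hy Hxs Hpos Hx0 (Hx 1%nat)) as [w' [Hw' Hw'x]].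
  unfold sat_atom in Hw'; simpl in Hw'.
  pose proof (bounded_unreset_clock y ku c Hy0 Hy Hku Hau 3); lra.
Qed.

End Iteration.

Theorem lemma2 (m : nat) (sigma : list trans) (v0 : valuation) :
  (forall t, In t sigma -> wf_trans m t) ->
  is_valuation m v0 ->
  (cond_C1 sigma \/ cond_C2 sigma \/ cond_C3 sigma) ->
  ~ omega_iterable sigma v0.
Proof.
  intros Hwf Hv0 HC [vs [Hvs0 Hrun]]; subst v0.
  destruct HC as [HC | [HC | HC]];
    [eapply not_C1 | eapply not_C2 | eapply not_C3]; eauto.
Qed.
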